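(* Let $G$ be a directed acyclic graph with $n$ vertices labelled $v_1,\ldots,v_n$ in a topological order (every edge goes from some $v_a$ to some $v_b$ with $a<b$), with real edge lengths, and let $\varepsilon>0$ and $q=(1+\varepsilon)^{1/(n+1)}$. Let $\tau$ and $\tau'$ be the functions defined in the context. Then for all integers $i,j$ with $1\le i\le n$ and $i\le j$, $$\tau(v_i,q^{j-i})\;\le\;\tau'(v_i,q^j)\;\le\;\tau(v_i,q^j).$$
   Context: For a vertex $v_i$ and a real number $x\ge 0$, $\tau(v_i,x)$ is the infimum of all real $L'$ such that there are at least $x$ directed paths from $v_1$ to $v_i$ of length (sum of edge lengths) at most $L'$, with $\inf\emptyset=\infty$; the trivial path from $v_1$ to itself has length $0$, so $\tau(v_1,0)=-\infty$, $\tau(v_1,x)=0$ for $0<x\le 1$, $\tau(v_1,x)=\infty$ for $x>1$. For a vertex $v_i$ with $i>1$, let $p_1,\ldots,p_d$ be the tails of the edges entering $v_i$ and $l_1,\ldots,l_d$ the lengths of these edges. The function $\tau'$ is defined on pairs $(v_i,y)$ with $y=0$ or $y=q^j$ for an integer $j$ by: $\tau'(v_1,0)=-\infty$, $\tau'(v_1,y)=0$ for $0<y\le 1$, $\tau'(v_1,y)=\infty$ for $y>1$, and for $i>1$, $$\tau'(v_i,q^j)=\min_{\substack{\alpha_1,\ldots,\alpha_d\ge 0\\ \sum_s\alpha_s=1}}\ \max_{s}\Big(\tau'\big(p_s,q^{\lfloor j+\log_q\alpha_s\rfloor}\big)+l_s\Big),$$ where $q^{\lfloor j+\log_q\alpha_s\rfloor}$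 is interpreted as $0$ when $\alpha_s=0$, and $\tau'(v_i,0)=-\infty$ for every $i$. *)

From HB Require Import structures.
From mathcomp Require Import all_boot all_order all_algebra.
From mathcomp Require Import all_classical all_reals all_analysis.
Set Implicit Arguments. Unset Strict Implicit. Unset Printing Implicit Defensive.
Import Order.TTheory GRing.Theory Num.Theory.
Local Open Scope ring_scope.

(* Graph: vertices 'I_n (index k stands for v_{k+1}, so index 0 is v_1);
   edges 'I_m, edge e goes from tl e to hd e with length len e. *)

Fixpoint is_path (n m : nat) (tl hd : 'I_m -> 'I_n) (u : nat) (p : seq 'I_m)
    (v : 'I_n) : bool :=
  match p with
  | [::] => u == val v
  | e :: p' => (val (tl e) == u) && is_path tl hd (val (hd e)) p' v
  end.

Definition path_len (R : realType) (m : nat) (len : 'I_m -> R) (p : seq 'I_m) : R :=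
  \sum_(e <- p) len e.

(* tau(v, x) = inf { L' | there are at least x directed paths from v_1 to v
   of length at most L' }, in the extended reals (inf of empty set = +oo). *)
Definition tau (R : realType) (n m : nat) (tl hd : 'I_m -> 'I_n) (len : 'I_m -> R)
    (v : 'I_n) (x : R) : \bar R :=
  ereal_inf [set L%:E | L in [set L : R | exists s : seq (seq 'I_m),
      [/\ uniq s,
          (forall p, p \in s -> is_path tl hd 0 p v /\ path_len len p <= L)
        & x <= (size s)%:R]]].

(* Argument y of tau' : None encodes y = 0, Some j encodes y = q^j. *)
Definition tau'_step (R : realType) (n m : nat) (tl hd : 'I_m -> 'I_n)
    (len : 'I_m -> R) (q : R) (f : 'I_n -> option int -> \bar R)
    (v : 'I_n) (y : option int) : \bar R :=
  match y with
  | None => -oo%E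
  | Some j =>
    if val v == 0%N then (if q ^ j <= 1 then 0%E else +oo%E)
    else ereal_inf
      [set (\big[maxe/-oo%E]_(e | hd e == v)
              (f (tl e) (if alpha e == 0%R then None
                         else Some (Num.floor (j%:~R + ln (alpha e) / ln q)%R))
               + (len e)%:E)%E)
      | alpha in [set alpha : 'I_m -> R |
                  (forall e, hd e == v -> 0 <= alpha e) /\
                  \sum_(e | hd e == v) alpha e = 1]]
  end.

(* tau' is defined by recursion along the topological order; n rounds of
   the recursive step suffice, since each vertex only refers to tails of
   its in-edges, which have smaller index. *)
Definition tau' (R : realType) (n m : nat) (tl hd : 'I_m -> 'I_n)
    (len : 'I_m -> R) (q : R) : 'I_n -> option int -> \bar R :=
  iter n (tau'_step tl hd len q) (fun _ _ => -oo%E).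

From HB Require Import structures.
From mathcomp Require Import all_boot all_order all_algebra.
From mathcomp Require Import all_classical all_reals all_analysis.
From mathcomp Require Import lra.
Import Order.TTheory GRing.Theory Num.Theory.
Local Open Scope ring_scope.
Set Implicit Arguments. Unset Strict Implicit. Unset Printing Implicit Defensive.

(* Upper bound: a family of at least q^j short paths to v splits according to
   the last edge; the proportions alpha_e of this split are admissible in the
   definition of tau', and removing e from the paths ending with e leaves at
   least alpha_e q^j >= q^(floor (j + log_q alpha_e)) short paths to the tail
   of e.  Lower bound: conversely, for an admissible alpha the induction
   hypothesis yields families of short paths to the tails of the in-edges,
   which extend along the in-edges to paths to v; rounding j + log_q alpha_e
   down loses at most one factor q per vertex, whence the shift of the
   exponent by the index of v. *)

Section RealFacts.
Variable R : realType.

Lemma exprz_expR (q : R) (z : int) : 0 < q -> q ^ z = expR (z%:~R * ln q).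
Proof.
move=> q0.
have expr_expR (k : nat) : q ^+ k = expR (k%:R * ln q).
  by rewrite -[LHS]lnK ?posrE ?exprn_gt0 // lnXn // mulr_natl.
case: z => k; first by rewrite -exprnP expr_expR pmulrn.
by rewrite NegzE -invr_expz -exprnP expr_expR -expRN intrN mulNr pmulrn.
Qed.

Lemma lee_fin_gt (x y : \bar R) :
  (forall L : R, (y < L%:E)%E -> (x <= L%:E)%E) -> (x <= y)%E.
Proof.
case: y => [y| |] xL; last 2 first.
- by rewrite leey.
- case: x xL => [x| |] xL //; last by have := xL 0 (ltNyr _).
  by have := xL (x - 1) (ltNyr _); rewrite lee_fin => ?; exfalso; lra.
apply/lee_addgt0Pr => e e0; rewrite -EFinD; apply: xL; rewrite lte_fin; lra.
Qed.

Definition floor_logq (q a : R) (j : int) : int := Num.floor (j%:~R + ln a / ln q).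

Variable q : R.
Hypothesis q_gt1 : 1 < q.

Let q_gt0 : 0 < q. Proof. exact: lt_trans q_gt1. Qed.
Let lnq_gt0 : 0 < ln q. Proof. by rewrite ln_gt0. Qed.

Lemma floor_logq_le (a : R) (j : int) : 0 < a -> q ^ floor_logq q a j <= a * q ^ j.
Proof.
move=> a0; rewrite !exprz_expR // -[X in X * expR _](lnK a0) -expRD ler_expR.
have := floor_le (j%:~R + ln a / ln q).
rewrite -(ler_pM2r lnq_gt0) -/(floor_logq q a j).
by rewrite mulrDl divfK ?gt_eqF // addrC.
Qed.

Lemma floor_logq_gt (a : R) (j : int) : 0 < a -> a * q ^ j < q ^ (floor_logq q a j + 1).
Proof.
move=> a0; rewrite !exprz_expR // -[X in X * expR _](lnK a0) -expRD ltr_expR.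
have := floorD1_gt (j%:~R + ln a / ln q).
rewrite -(ltr_pM2r lnq_gt0) -/(floor_logq q a j).
by rewrite mulrDl divfK ?gt_eqF // addrC.
Qed.

Lemma floor_logq_subS (a : R) (j : int) (k : nat) : 0 < a ->
  a * q ^ (j - k.+1%:Z) <= q ^ (floor_logq q a j - k%:Z).
Proof.
move=> a0; have qB z z' : q ^ (z - z') = q ^ z / q ^ z'.
  by rewrite expfzDr ?lt0r_neq0 // invr_expz.
have -> : floor_logq q a j - k%:Z = floor_logq q a j + 1 - k.+1%:Z.
  by rewrite intS opprD addrA addrK.
rewrite !qB mulrA ler_pM2r ?invr_gt0 ?exprz_gt0 //.
exact: ltW (floor_logq_gt j a0).
Qed.

End RealFacts.

Definition last_edge {m : nat} (p : seq 'I_m) : option 'I_m := ohead (rev p).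
Definition drop_last_edge {m : nat} (p : seq 'I_m) : seq 'I_m := rev (behead (rev p)).

Lemma ord_ltn_ind k (P : 'I_k -> Prop) :
  (forall i, (forall i', (val i' < val i)%N -> P i') -> P i) -> forall i, P i.
Proof.
move=> IH i; have [b ib] := ubnP (val i); elim: b i ib => // b IHb i ib.
by apply: IH => i' i'i; apply: IHb; exact: leq_trans i'i ib.
Qed.

Section Paths.
Variables (R : realType) (n m : nat) (tl hd : 'I_m -> 'I_n) (len : 'I_m -> R).
Hypothesis tl_lt_hd : forall e, (val (tl e) < val (hd e))%N.

Lemma is_path_rcons u p e v :
  is_path tl hd u (rcons p e) v = is_path tl hd u p (tl e) && (hd e == v).
Proof.
by elim: p u => [|e' p IH] u /=; [rewrite eq_sym | rewrite IH andbA].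
Qed.

Lemma is_path_leq u p v :
  is_path tl hd u p v -> (u <= val v)%N /\ (p != [::] -> (u < val v)%N).
Proof.
elim: p u => [|e p IH] u /=; first by move/eqP->.
case/andP => /eqP <- /IH [hd_le _].
split=> [|_]; first exact: leq_trans (ltnW (tl_lt_hd e)) hd_le.
exact: leq_trans (tl_lt_hd e) hd_le.
Qed.

Lemma is_path_source p v : val v = 0%N -> is_path tl hd 0 p v -> p = [::].
Proof. by move=> v0 /is_path_leq[_]; case: p => // e p /(_ isT); rewrite v0. Qed.

Lemma is_pathP p v : val v != 0%N -> is_path tl hd 0 p v ->
  exists p' e, [/\ p = rcons p' e, is_path tl hd 0 p' (tl e) & hd e == v].
Proof.
move=> v0; case/lastP: p => [|p e] /=; first by rewrite eq_sym (negPf v0).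
by rewrite is_path_rcons => /andP[? ?]; exists p, e.
Qed.

Lemma path_len_nil : path_len len [::] = 0.
Proof. by rewrite /path_len big_nil. Qed.

Lemma path_len_rcons p e : path_len len (rcons p e) = path_len len p + len e.
Proof. by rewrite /path_len -cats1 big_cat big_seq1. Qed.

Lemma last_edge_rcons (p : seq 'I_m) e : last_edge (rcons p e) = Some e.
Proof. by rewrite /last_edge rev_rcons. Qed.

Lemma drop_last_edge_rcons (p : seq 'I_m) e : drop_last_edge (rcons p e) = p.
Proof. by rewrite /drop_last_edge rev_rcons /= revK. Qed.

Lemma last_edgeP (p : seq 'I_m) e :
  last_edge p = Some e -> p = rcons (drop_last_edge p) e.
Proof.
by case/lastP: p => [|p e'] //; rewrite last_edge_rcons drop_last_edge_rcons => -[->].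
Qed.

Lemma sum_count_last_edge v (s : seq (seq 'I_m)) : val v != 0%N ->
  (forall p, p \in s -> is_path tl hd 0 p v) ->
  (\sum_(e | hd e == v) count (fun p => last_edge p == Some e) s = size s)%N.
Proof.
move=> v0; elim: s => [_|p s IH s_paths] /=; first by rewrite big1.
rewrite big_split /= IH => [|p' p's]; last by apply: s_paths; rewrite inE p's orbT.
have [p' [e [-> _ he]]] := is_pathP v0 (s_paths p (mem_head _ _)).
rewrite (bigD1 e) //= last_edge_rcons eqxx big1 // => e' /andP[_ e'e].
by case: eqP => // -[e'E]; rewrite e'E eqxx in e'e.
Qed.

End Paths.

Section Tau.
Variables (R : realType) (n m : nat) (tl hd : 'I_m -> 'I_n) (len : 'I_m -> R).
Hypothesis tl_lt_hd : forall e, (val (tl e) < val (hd e))%N.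

Local Notation is_path := (is_path tl hd).
Local Notation path_len := (path_len len).
Local Notation tau := (tau tl hd len).

Lemma le_tau v x y : x <= y -> (tau v x <= tau v y)%E.
Proof.
move=> xy; apply/ereal_infP => _ [L [s [us s_paths ys]] <-].
by apply: ereal_inf_lbound; exists L => //; exists s; split=> //; exact: le_trans ys.
Qed.

Lemma tau_le v x L s : uniq s ->
  (forall p, p \in s -> is_path 0 p v /\ path_len p <= L) ->
  x <= (size s)%:R -> (tau v x <= L%:E)%E.
Proof. by move=> us s_paths xs; apply: ereal_inf_lbound; exists L => //; exists s. Qed.

Lemma tau_lt v x L : (tau v x < L%:E)%E -> exists s, [/\ uniq s,
  (forall p, p \in s -> is_path 0 p v /\ path_len p <= L) & x <= (size s)%:R].
Proof.
case/ereal_inf_lt => _ [L' [s [us s_paths xs]] <-]; rewrite lte_fin => L'L.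
by exists s; split=> // p /s_paths[? ?]; split=> //; exact: le_trans (ltW L'L).
Qed.

Lemma tau_source v x : val v = 0%N -> 0 < x ->
  tau v x = if x <= 1 then 0%E else +oo%E.
Proof.
move=> v0 x0; have nil_only (s : seq (seq 'I_m)) :
    (forall p, p \in s -> is_path 0 p v) -> {subset s <= [:: [::]]}.
  by move=> s_paths p /s_paths/(is_path_source tl_lt_hd v0) ->; rewrite mem_head.
case: ifP => x1; apply/eqP; rewrite eq_le; apply/andP; split.
- apply: (@tau_le _ _ _ [:: [::]]) => // p; rewrite inE => /eqP ->.
  by rewrite path_len_nil /= v0.
- apply/ereal_infP => _ [L [[|p s] [us s_paths xs]] <-].
    by move: xs; rewrite /= leNgt x0.
  have [p_path p_len] := s_paths p (mem_head _ _).
  by rewrite (is_path_source tl_lt_hd v0 p_path) path_len_nil in p_len.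
- by rewrite leey.
- apply/ereal_infP => _ [L [s [us s_paths xs]] <-]; exfalso.
  have /= := uniq_leq_size us (nil_only s (fun p ps => (s_paths p ps).1)).
  rewrite -(ler_nat R) => s1.
  by move: x1; rewrite (le_trans xs s1).
Qed.

Lemma tau_le_extend v L (S : 'I_m -> seq (seq 'I_m)) :
  (forall e, hd e == v -> uniq (S e) /\
    forall p, p \in S e -> is_path 0 p (tl e) /\ path_len p <= L - len e) ->
  (tau v (\sum_(e | hd e == v) (size (S e))%:R) <= L%:E)%E.
Proof.
move=> S_paths; pose in_v := [seq e <- index_enum 'I_m | hd e == v].
apply: (@tau_le _ _ _ [seq rcons p e | e <- in_v, p <- S e]).
- rewrite allpairs_uniq_dep ?filter_uniq ?index_enum_uniq //.
    by move=> e; rewrite mem_filter => /andP[/S_paths[]].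
  by move=> [e1 p1] [e2 p2] _ _ /= /rcons_inj[-> ->].
- move=> _ /allpairsPdep[e [p [+ pS ->]]]; rewrite mem_filter => /andP[he _].
  have [_ /(_ p pS)[p_path p_len]] := S_paths e he.
  by rewrite is_path_rcons p_path he path_len_rcons; split=> //; lra.
- by rewrite size_allpairs_dep sumnE big_map big_filter natr_sum.
Qed.

Lemma tau_tail_le v L e s : uniq s ->
  (forall p, p \in s -> is_path 0 p v /\ path_len p <= L) ->
  (tau (tl e) (count (fun p => last_edge p == Some e) s)%:R <= (L - len e)%:E)%E.
Proof.
move=> us s_paths; rewrite -size_filter -(size_map drop_last_edge).
apply: tau_le => //.
- rewrite map_inj_in_uniq ?filter_uniq // => p1 p2.
  rewrite !mem_filter => /andP[/eqP/last_edgeP p1E _] /andP[/eqP/last_edgeP p2E _] E.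
  by rewrite p1E p2E E.
- move=> p' /mapP[p]; rewrite mem_filter => /andP[/eqP/last_edgeP pE ps] ->.
  have [] := s_paths p ps; rewrite pE is_path_rcons path_len_rcons.
  by case/andP=> ? _ ?; rewrite drop_last_edge_rcons; split=> //; lra.
Qed.

End Tau.

Section TauPrime.
Variables (R : realType) (n m : nat) (tl hd : 'I_m -> 'I_n) (len : 'I_m -> R).
Hypothesis tl_lt_hd : forall e, (val (tl e) < val (hd e))%N.
Variable q : R.

Local Notation step := (tau'_step tl hd len q).
Local Notation tau' := (tau' tl hd len q).

Lemma tau'_step_ext f g v y : (forall u, (val u < val v)%N -> f u = g u) ->
  step f v y = step g v y.
Proof.
move=> fg; case: y => // j /=; case: ifP => // _.
congr ereal_inf; apply/seteqP; split=> _ [a a_adm <-]; exists a => //;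
  by apply: eq_bigr => e /eqP he; rewrite fg // -he tl_lt_hd.
Qed.

Lemma iter_tau'_step_stable k v : (val v < k)%N ->
  iter k step (fun _ _ => -oo%E) v = iter k.+1 step (fun _ _ => -oo%E) v.
Proof.
elim: k v => // k IH v vk /=; apply/funext => y.
by apply: tau'_step_ext => u uv; apply: IH; exact: leq_trans uv vk.
Qed.

Lemma tau'E v y : tau' v y = step tau' v y.
Proof. by rewrite /tau' (iter_tau'_step_stable (ltn_ord v)). Qed.

Lemma tau'_None v : tau' v None = -oo%E.
Proof. by rewrite tau'E. Qed.

End TauPrime.

Section Bounds.
Variables (R : realType) (n m : nat) (tl hd : 'I_m -> 'I_n) (len : 'I_m -> R).
Hypothesis tl_lt_hd : forall e, (val (tl e) < val (hd e))%N.
Variable q : R.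
Hypothesis q_gt1 : 1 < q.

Local Notation tau := (tau tl hd len).
Local Notation tau' := (tau' tl hd len q).

Let q_gt0 : 0 < q. Proof. exact: lt_trans q_gt1. Qed.

Lemma tau'_source v j : val v = 0%N -> tau' v (Some j) = tau v (q ^ j).
Proof.
by move=> v0; rewrite (tau'E _ tl_lt_hd) /= v0 /= (tau_source _ tl_lt_hd) // exprz_gt0.
Qed.

Lemma tau'_le_tau_nonsource v j : val v != 0%N ->
  (forall e, hd e == v -> forall j', (tau' (tl e) (Some j') <= tau (tl e) (q ^ j'))%E) ->
  (tau' v (Some j) <= tau v (q ^ j))%E.
Proof.
move=> v0 IH; rewrite (tau'E _ tl_lt_hd) /= (negPf v0).
apply/ereal_infP => _ [L [s [us s_paths qs]] <-].
have s_gt0 : 0 < (size s)%:R :> R := lt_le_trans (exprz_gt0 j q_gt0) qs.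
pose a e := (count (fun p => last_edge p == Some e) s)%:R / (size s)%:R : R.
have s_to_v p : p \in s -> is_path tl hd 0 p v by case/s_paths.
have a_sum : \sum_(e | hd e == v) a e = 1.
  by rewrite -mulr_suml -natr_sum (sum_count_last_edge v0 s_to_v) divff ?gt_eqF.
apply: ge_ereal_inf; eexists; first by exists a => //; split=> // e _; exact: divr_ge0.
apply: bigmax_le => [|e he]; first exact: leNye.
case: ifP => [_|a_neq0]; first by rewrite (tau'_None _ tl_lt_hd) addNye leNye.
rewrite -leeBrDr // -EFinB; apply: le_trans (IH e he _) _.
apply: le_trans (tau_tail_le e us s_paths); apply: le_tau.
have a_gt0 : 0 < a e by rewrite lt_def a_neq0 divr_ge0.
apply: le_trans (floor_logq_le q_gt1 j a_gt0) _.
by rewrite -[X in _ <= X](divfK (lt0r_neq0 s_gt0)) -/(a e) ler_pM2l.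
Qed.

Lemma tau_le_tau'_nonsource v j : val v != 0%N ->
  (forall e, hd e == v -> forall j',
     (tau (tl e) (q ^ (j' - (val (tl e)).+1%:Z)) <= tau' (tl e) (Some j'))%E) ->
  (tau v (q ^ (j - (val v).+1%:Z)) <= tau' v (Some j))%E.
Proof.
move=> v0 IH; rewrite (tau'E _ tl_lt_hd) /= (negPf v0).
apply/ereal_infP => _ [a [a_ge0 a_sum] <-]; apply: lee_fin_gt => L maxL.
have tails e : exists S : seq (seq 'I_m), hd e == v -> [/\ uniq S,
    forall p, p \in S -> is_path tl hd 0 p (tl e) /\ path_len len p <= L - len e
  & a e != 0 -> q ^ (floor_logq q (a e) j - (val v)%:Z) <= (size S)%:R].
  have [he|] := boolP (hd e == v); last by exists [::].
  have [a0|a_neq0] := eqVneq (a e) 0.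
    by exists [::] => _; split=> //; rewrite a0 eqxx.
  have tail_lt : (tau' (tl e) (Some (floor_logq q (a e) j)) < (L - len e)%:E)%E.
    rewrite EFinB lteBrDr //; apply: le_lt_trans maxL.
    by rewrite (bigD1 e) //= (negPf a_neq0) le_max lexx.
  have [S [uS S_paths qS]] := tau_lt (le_lt_trans (IH e he _) tail_lt).
  exists S => _; split=> // _; apply: le_trans qS; rewrite ler_eXz2l //.
  by rewrite lerD2l lerN2 lez_nat -(eqP he) tl_lt_hd.
have [S S_tails] := choice tails.
apply: le_trans (le_tau tl hd len v _) (tau_le_extend (S := S) _); last first.
  by move=> e /S_tails[].
rewrite -[X in X <= _]mul1r -{1}a_sum mulr_suml; apply: ler_sum => e he.
have [a0|a_neq0] := eqVneq (a e) 0; first by rewrite a0 mul0r.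
have [_ _ /(_ a_neq0) qS] := S_tails e he; apply: le_trans qS.
have a_gt0 : 0 < a e by rewrite lt_def a_neq0 a_ge0.
exact: (floor_logq_subS q_gt1 j (nat_of_ord v) a_gt0).
Qed.

Lemma tau'_le_tau v j : (tau' v (Some j) <= tau v (q ^ j))%E.
Proof.
elim/ord_ltn_ind: v j => v IH j.
have [v0|v0] := eqVneq (val v) 0%N; first by rewrite tau'_source.
by apply: tau'_le_tau_nonsource => // e he j'; apply: IH; rewrite -(eqP he) tl_lt_hd.
Qed.

Lemma tau_le_tau' v j : (tau v (q ^ (j - (val v).+1%:Z)) <= tau' v (Some j))%E.
Proof.
elim/ord_ltn_ind: v j => v IH j.
have [v0|v0] := eqVneq (val v) 0%N.
  by rewrite tau'_source // le_tau // ler_eXz2l // gerBl.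
by apply: tau_le_tau'_nonsource => // e he j'; apply: IH; rewrite -(eqP he) tl_lt_hd.
Qed.

End Bounds.

Theorem lemma1 (R : realType) (n m : nat) (tl hd : 'I_m -> 'I_n)
    (len : 'I_m -> R)
    (Htop : forall e, (val (tl e) < val (hd e))%N)
    (Hsimple : injective (fun e => (tl e, hd e)))
    (eps : R) (Heps : 0 < eps) (i : 'I_n) (j : int)
    (Hij : (val i).+1%:Z <= j) :
  let q := (1 + eps) `^ (n.+1%:R)^-1 in
  (tau tl hd len i (q ^ (j - (val i).+1%:Z)) <= tau' tl hd len q i (Some j))%E /\
  (tau' tl hd len q i (Some j) <= tau tl hd len i (q ^ j))%E.
Proof.
move=> q; have q_gt0 : 0 < q by rewrite powR_gt0 // addr_gt0.
have q_gt1 : 1 < q.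
  rewrite -[q]lnK ?posrE // expR_gt1 /q ln_powR mulr_gt0 ?invr_gt0 //.
  by rewrite ln_gt0 // ltrDl.
by split; [exact: tau_le_tau' | exact: tau'_le_tau].
Qed.
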